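(* Let $X$ be a random variable taking values in a set $\mathcal{X}$, $Y \in [0,1]$ a target outcome and $\hat{Y} \in [0,1]$ an expert prediction, all jointly distributed. Let $\mathcal{F}$ be a class of functions $\mathcal{X} \to [0,1]$, $\alpha \ge 0$, and let $S \subseteq \mathcal{X}$ be $\alpha$-indistinguishable with respect to $\mathcal{F}$ and $Y$. Let $g : [0,1] \to [0,1]$ satisfy, for some $\eta \ge 0$, $$\mathbb{E}_S[(Y - g(\hat{Y}))^2] \le \mathbb{E}_S[(Y - \mathbb{E}_S[Y \mid \hat{Y}])^2] + \eta.$$ Then for every $f \in \mathcal{F}$, $$\mathbb{E}_S[(Y - g(\hat{Y}))^2] + 4\,\mathrm{Cov}_S(Y, \hat{Y})^2 \le \mathbb{E}_S[(Y - f(X))^2] + 2\alpha + \eta.$$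
   Context: For $S \subseteq \mathcal{X}$ with $\mathbb{P}(X \in S) > 0$, $\mathbb{E}_S$, $\mathrm{Cov}_S$ and $\mathbb{E}_S[\cdot \mid \hat{Y}]$ denote expectation, covariance and conditional expectation conditional on $\{X \in S\}$. A set $S$ is $\alpha$-indistinguishable with respect to $\mathcal{F}$ and $Y$ if $|\mathrm{Cov}(f(X), Y \mid X \in S)| \le \alpha$ for all $f \in \mathcal{F}$. *)

From HB Require Import structures.
From mathcomp Require Import all_boot all_order all_algebra.
From mathcomp Require Import all_classical all_reals all_analysis.
Set Implicit Arguments. Unset Strict Implicit. Unset Printing Implicit Defensive.
Import Order.TTheory GRing.Theory Num.Theory.
Local Open Scope classical_set_scope.
Local Open Scope ring_scope.

Definition condE {d} {T : measurableType d} {R : realType}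
  (P : probability T R) (A : set T) (Z : T -> R) : R :=
  fine (\int[P]_(w in A) (Z w)%:E)%E / fine (P A).

Definition condCov {d} {T : measurableType d} {R : realType}
  (P : probability T R) (A : set T) (U V : T -> R) : R :=
  condE P A (fun w => U w * V w) - condE P A U * condE P A V.

Definition indistinguishable {d d'} {T : measurableType d}
  {Xs : measurableType d'} {R : realType}
  (P : probability T R) (X : T -> Xs) (Y : T -> R)
  (F : set (Xs -> R)) (alpha : R) (S : set Xs) : Prop :=
  forall f, F f -> `| condCov P (X @^-1` S) (fun w => f (X w)) Y | <= alpha.

(* (h o Yh) is a version of the conditional expectation E_A[Y | Yh]
   (conditional on the event A). *)
Definition is_condexp {d} {T : measurableType d} {R : realType}
  (P : probability T R) (A : set T) (Y Yh : T -> R) (h : R -> R) : Prop :=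
  measurable_fun setT h /\
  P.-integrable A (fun w => (h (Yh w))%:E) /\
  forall B : set R, measurable B ->
    (\int[P]_(w in A `&` Yh @^-1` B) (Y w)%:E =
     \int[P]_(w in A `&` Yh @^-1` B) (h (Yh w))%:E)%E.

From HB Require Import structures.
From mathcomp Require Import all_boot all_order all_algebra.
From mathcomp Require Import all_classical all_reals all_analysis.
From mathcomp Require Import measurable_realfun lra.
Import Order.TTheory GRing.Theory Num.Theory.
Local Open Scope classical_set_scope.
Local Open Scope ring_scope.

(* Everything happens under the conditional law on [A = {X \in S}]. A version
   [h] of [E[Y | Yh]] lies in [[0, 1]] almost surely on [A], so it may be
   clipped to [[0, 1]]. The residual [Y - h(Yh)] integrates to zero on every
   event [{Yh \in B}]; removing dyadic levels of a bounded [psi] shows that it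
   is orthogonal to every [psi(Yh)], in particular to [1], [Yh] and [h(Yh)].
   Hence [E[(Y - h)^2] = Var Y - Var h] and [Cov(h, Yh) = Cov(Y, Yh)], and since
   [Var Yh <= 1/4], Cauchy-Schwarz gives [Var h >= 4 Cov(Y, Yh)^2]. On the other
   side [E[(Y - f)^2] >= Var (Y - f) >= Var Y - 2 Cov(f, Y) >= Var Y - 2 alpha]. *)

Section bounded_measurable.
Context {d} {T : measurableType d} {R : realType}.
Implicit Types (f g : T -> R) (c : R).

Definition bounded_measurable f :=
  measurable_fun setT f /\ exists M, forall w, `|f w| <= M.

Lemma bounded_measurable_cst c : bounded_measurable (fun=> c).
Proof. by split; [exact: measurable_cst | exists `|c|]. Qed.

Lemma bounded_measurable01 {f} : measurable_fun setT f ->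
  (forall w, 0 <= f w <= 1) -> bounded_measurable f.
Proof.
move=> mf f01; split => //; exists 1 => w.
by have /andP[f0 f1] := f01 w; rewrite ger0_norm.
Qed.

Lemma bounded_measurableD {f g} : bounded_measurable f -> bounded_measurable g ->
  bounded_measurable (fun w => f w + g w).
Proof.
move=> [mf [M fM]] [mg [N gN]]; split; first exact: measurable_funD.
by exists (M + N) => w; rewrite (le_trans (ler_normD _ _)) ?lerD.
Qed.

Lemma bounded_measurableN {f} : bounded_measurable f ->
  bounded_measurable (fun w => - f w).
Proof.
by move=> [mf [M fM]]; split; [exact: measurableT_comp | exists M => w; rewrite normrN].
Qed.

Lemma bounded_measurableB {f g} : bounded_measurable f -> bounded_measurable g ->
  bounded_measurable (fun w => f w - g w).
Proof. by move=> bf /bounded_measurableN; exact: bounded_measurableD. Qed.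

Lemma bounded_measurableM {f g} : bounded_measurable f -> bounded_measurable g ->
  bounded_measurable (fun w => f w * g w).
Proof.
move=> [mf [M fM]] [mg [N gN]]; split; first exact: measurable_funM.
by exists (M * N) => w; rewrite normrM ler_pM.
Qed.

Lemma bounded_measurableZ c {f} : bounded_measurable f ->
  bounded_measurable (fun w => c * f w).
Proof. exact/bounded_measurableM/bounded_measurable_cst. Qed.

Lemma bounded_measurable_integrable (mu : {finite_measure set T -> \bar R})
    {A : set T} {f} :
  measurable A -> bounded_measurable f -> mu.-integrable A (EFin \o f).
Proof.
move=> mA [mf [M fM]]; apply: measurable_bounded_integrable => //.
- by rewrite ltey_eq fin_num_measure.
- exact: measurable_funS mf.
- exists M; split; first by rewrite ger0_real // (le_trans _ (fM point)).
  by move=> x Mx y _; apply: le_trans (fM y) (ltW Mx).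
Qed.

End bounded_measurable.

#[local] Hint Resolve bounded_measurable_cst bounded_measurableD
  bounded_measurableB bounded_measurableM bounded_measurableZ : core.

Section conditional_expectation.
Context {d} {T : measurableType d} {R : realType} (P : probability T R).
Context {A : set T} (mA : measurable A) (PA : (0 < P A)%E).
Implicit Types (f g k : T -> R) (c : R).

Let intA f : bounded_measurable f -> P.-integrable A (EFin \o f).
Proof. exact: bounded_measurable_integrable. Qed.

Let PA_fine_gt0 : 0 < fine (P A).
Proof. by rewrite fine_gt0 // PA (le_lt_trans (probability_le1 _ mA)) ?ltry. Qed.

Lemma condEE f : condE P A f = (\int[P]_(w in A) f w) / fine (P A).
Proof. by []. Qed.

Lemma condEB f g : bounded_measurable f -> bounded_measurable g ->
  condE P A (fun w => f w - g w) = condE P A f - condE P A g.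
Proof. by move=> bf bg; rewrite !condEE -mulrBl RintegralB ?intA. Qed.

Lemma condEZ c f : bounded_measurable f ->
  condE P A (fun w => c * f w) = c * condE P A f.
Proof. by move=> bf; rewrite !condEE mulrA RintegralZl ?intA. Qed.

Lemma condE_cst c : condE P A (fun=> c) = c.
Proof. by rewrite condEE Rintegral_cst // mulfK // gt_eqF. Qed.

Lemma condE_le f g : bounded_measurable f -> bounded_measurable g ->
  (forall w, f w <= g w) -> condE P A f <= condE P A g.
Proof.
move=> bf bg fg; rewrite !condEE ler_pM2r ?invr_gt0 //.
by apply: le_Rintegral; rewrite ?intA.
Qed.

Lemma condE_ae_eq f g : measurable_fun setT f -> measurable_fun setT g ->
  {ae P, forall w, A w -> f w = g w} -> condE P A f = condE P A g.
Proof.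
move=> mf mg fg; rewrite /condE; congr (fine _ / _).
apply: ae_eq_integral => //.
- exact/measurable_EFinP/(measurable_funS _ _ mf).
- exact/measurable_EFinP/(measurable_funS _ _ mg).
by apply: filterS fg => w fgw /fgw /= ->.
Qed.

Lemma condE_sqr f :
  condE P A (fun w => f w ^+ 2) = condCov P A f f + condE P A f ^+ 2.
Proof.
by rewrite /condCov expr2 subrK; congr condE; apply/funext => w; rewrite expr2.
Qed.

Lemma condCovC f g : condCov P A f g = condCov P A g f.
Proof.
rewrite /condCov [condE P A f * _]mulrC; congr (condE P A _ - _).
by apply/funext => w; rewrite mulrC.
Qed.

Lemma condCovBl f g k : bounded_measurable f -> bounded_measurable g ->
  bounded_measurable k ->
  condCov P A (fun w => f w - g w) k = condCov P A f k - condCov P A g k.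
Proof.
move=> bf bg bk; rewrite /condCov.
rewrite (_ : (fun w => _ * k w) = fun w => f w * k w - g w * k w); last first.
  by apply/funext => w; rewrite mulrBl.
by rewrite !condEB; auto; lra.
Qed.

Lemma condCovZl c f g : bounded_measurable f -> bounded_measurable g ->
  condCov P A (fun w => c * f w) g = c * condCov P A f g.
Proof.
move=> bf bg; rewrite /condCov.
rewrite (_ : (fun w => _ * g w) = fun w => c * (f w * g w)); last first.
  by apply/funext => w; rewrite mulrA.
by rewrite !condEZ; auto; lra.
Qed.

Lemma condCovZr c f g : bounded_measurable f -> bounded_measurable g ->
  condCov P A f (fun w => c * g w) = c * condCov P A f g.
Proof. by move=> bf bg; rewrite condCovC condCovZl // condCovC. Qed.

Lemma condVarB f g : bounded_measurable f -> bounded_measurable g ->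
  condCov P A (fun w => f w - g w) (fun w => f w - g w) =
  condCov P A f f - 2 * condCov P A f g + condCov P A g g.
Proof.
move=> bf bg; rewrite condCovBl; auto.
rewrite (condCovC f) (condCovC g) !condCovBl; auto.
by rewrite [condCov P A g f]condCovC; lra.
Qed.

Lemma condE_sqrB_cst f c : bounded_measurable f ->
  condE P A (fun w => (f w - c) ^+ 2) = condCov P A f f + (condE P A f - c) ^+ 2.
Proof.
move=> bf; rewrite (_ : (fun w => _) = fun w => f w * f w - (2 * c * f w - c ^+ 2)).
  by rewrite !condEB ?condEZ ?condE_cst /condCov; auto; lra.
by apply/funext => w; rewrite sqrrB; lra.
Qed.

Lemma condVar_ge0 {f} : bounded_measurable f -> 0 <= condCov P A f f.
Proof.
move=> bf; have := @condE_sqrB_cst f (condE P A f) bf.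
rewrite subrr expr0n addr0 => <-; rewrite -(condE_cst 0).
have bfc := bounded_measurableB bf (bounded_measurable_cst (condE P A f)).
by apply: condE_le (bounded_measurableM bfc bfc) _ => // w; exact: sqr_ge0.
Qed.

Lemma condVar_le {f} : measurable_fun setT f -> (forall w, 0 <= f w <= 1) ->
  condCov P A f f <= 4^-1.
Proof.
move=> mf f01; have bf := bounded_measurable01 mf f01.
have Eff : condE P A (fun w => f w * f w) <= condE P A f.
  apply: condE_le (bounded_measurableM bf bf) bf _ => w.
  by have /andP[f0 f1] := f01 w; rewrite ler_piMr.
rewrite /condCov; have := sqr_ge0 (condE P A f - 2^-1); lra.
Qed.

(* Expand [0 <= Var (f - l g)] at [l = 4 Cov (f, g)] and use [Var g <= 1/4]. *)
Lemma condCov_sqr_le {f g} : bounded_measurable f -> measurable_fun setT g ->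
  (forall w, 0 <= g w <= 1) -> 4 * condCov P A f g ^+ 2 <= condCov P A f f.
Proof.
move=> bf mg g01; have bg := bounded_measurable01 mg g01.
set c := condCov P A f g.
have := condVar_ge0 (bounded_measurableB bf (bounded_measurableZ (4 * c) bg)).
rewrite condVarB ?condCovZr ?condCovZl ?condCovZr -/c; auto.
have := condVar_le mg g01; have := sqr_ge0 c; nra.
Qed.

Lemma condE_sqrB_ge {f g} : bounded_measurable f -> bounded_measurable g ->
  condCov P A f f - 2 * condCov P A g f <= condE P A (fun w => (f w - g w) ^+ 2).
Proof.
move=> bf bg; rewrite condE_sqr condVarB // condCovC.
by have := condVar_ge0 bg; have := sqr_ge0 (condE P A (fun w => f w - g w)); lra.
Qed.

Lemma condE_sqrB_orth {f g} : bounded_measurable f -> bounded_measurable g ->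
  condE P A (fun w => f w - g w) = 0 -> condCov P A (fun w => f w - g w) g = 0 ->
  condE P A (fun w => (f w - g w) ^+ 2) = condCov P A f f - condCov P A g g.
Proof.
move=> bf bg E0; rewrite condE_sqr condVarB // condCovBl // E0; lra.
Qed.

End conditional_expectation.

Section clip01.
Context {R : realDomainType}.

Definition clip01 (x : R) : R := Num.max 0 (Num.min 1 x).

Lemma clip01_ge0_le1 x : 0 <= clip01 x <= 1.
Proof. by rewrite /clip01 le_max lexx ge_max ler01 ge_min lexx. Qed.

Lemma clip01_id x : 0 <= x <= 1 -> clip01 x = x.
Proof. by move=> /andP[x0 x1]; rewrite /clip01 (min_r x1) (max_r x0). Qed.

End clip01.

Lemma measurable_clip01 {R : realType} : measurable_fun setT (@clip01 R).
Proof. by apply: measurable_maxr => //; exact: measurable_minr. Qed.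

Lemma gt0_integral_eq0_null {d} {T : measurableType d} {R : realType}
    (mu : {measure set T -> \bar R}) {E : set T} {u : T -> R} :
  measurable E -> measurable_fun E u -> (forall x, E x -> 0 < u x) ->
  (\int[mu]_(x in E) (u x)%:E = 0)%E -> mu E = 0%E.
Proof.
move=> mE /measurable_EFinP mEu u_gt0 int0.
have : (\int[mu]_(x in E) `|(u x)%:E| = 0)%E.
  rewrite -int0; apply: eq_integral => x /set_mem Ex.
  by rewrite gee0_abs // lee_fin ltW ?u_gt0.
move/(ae_eq_integral_abs mu mE mEu) => [N [mN N0 EN]].
apply: subset_measure0 mE mN _ N0 => x Ex; apply: EN => /= /(_ Ex) [ux0].
by have := u_gt0 x Ex; rewrite ux0 ltxx.
Qed.

Section orthogonality.
Context {d} {T : measurableType d} {R : realType} (P : probability T R).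
Context {A : set T} (mA : measurable A) {D Z : T -> R} {M : R}.
Hypotheses (mD : measurable_fun setT D) (DM : forall w, `|D w| <= M).
Hypotheses (mZ : measurable_fun setT Z)
  (D_orth : forall B, measurable B -> \int[P]_(w in A `&` Z @^-1` B) D w = 0).

Let bD : bounded_measurable D. Proof. by split; last exists M. Qed.

Let bounded_comp {psi : R -> R} {c} : measurable_fun setT psi ->
  (forall w, 0 <= psi (Z w) <= c) -> bounded_measurable (fun w => psi (Z w)).
Proof.
move=> mpsi psi_c; split; first exact: measurableT_comp.
by exists c => w; have /andP[psi0 psic] := psi_c w; rewrite ger0_norm.
Qed.

Lemma normr_Rintegral_mul_comp_le c (psi : R -> R) : measurable_fun setT psi ->
  (forall w, 0 <= psi (Z w) <= c) ->
  `|\int[P]_(w in A) (D w * psi (Z w))| <= M * c.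
Proof.
move=> mpsi psi_c; have bpsi := bounded_comp mpsi psi_c.
have M0 : 0 <= M by exact: le_trans (DM point).
have c0 : 0 <= c by case/andP: (psi_c point); exact: le_trans.
have iDpsi := bounded_measurable_integrable P mA (bounded_measurableM bD bpsi).
rewrite (le_trans (le_normr_Rintegral mA iDpsi)) //.
apply: (@le_trans _ _ (\int[P]_(w in A) (M * c))).
  apply: le_Rintegral => // [||w _].
  - exact: integrable_norm iDpsi.
  - exact/bounded_measurable_integrable/bounded_measurable_cst.
  by have /andP[psi0 psic] := psi_c w; rewrite normrM (ger0_norm psi0) ler_pM ?DM.
rewrite Rintegral_cst // ler_piMr ?mulr_ge0 //.
by rewrite -lee_fin fineK ?probability_le1 ?fin_num_measure.
Qed.

(* Remove [c/2] on [{psi >= c/2}], a set on which [D] integrates to zero. *)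
Lemma Rintegral_mul_comp_halve c (psi : R -> R) : measurable_fun setT psi ->
  (forall w, 0 <= psi (Z w) <= c) ->
  exists2 psi' : R -> R,
    measurable_fun setT psi' /\ (forall w, 0 <= psi' (Z w) <= c / 2) &
    \int[P]_(w in A) (D w * psi (Z w)) = \int[P]_(w in A) (D w * psi' (Z w)).
Proof.
move=> mpsi psi_c; set B := psi @^-1` `[c / 2, +oo[.
have mB : measurable B.
  by have := mpsi measurableT _ (measurable_itv `[c / 2, +oo[); rewrite setTI.
pose psi' t := psi t - c / 2 * \1_B t.
have mpsi' : measurable_fun setT psi'.
  by apply/measurable_funB/measurable_funM => //; exact: measurable_indic.
have psi'_c w : 0 <= psi' (Z w) <= c / 2.
  have inB : (Z w \in B) = (c / 2 <= psi (Z w)).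
    by rewrite /B /preimage set_itvE; apply/idP/idP => [/set_mem|/mem_set].
  rewrite /psi' indicE inB; have /andP[psi0 psic] := psi_c w.
  by case: (leP (c / 2)) => ?; rewrite ?mulr1 ?mulr0 ?subr0; apply/andP; split; lra.
exists psi' => //.
have bindB : bounded_measurable (fun w => \1_B (Z w) : R).
  apply: (@bounded_comp _ 1); first exact: measurable_indic.
  by move=> w; rewrite indicE; case: (_ \in _); rewrite ?lexx ?ler01.
have int_indicB : \int[P]_(w in A) (D w * \1_B (Z w)) = 0.
  rewrite -(D_orth B mB) Rintegral_mkcondr; apply: eq_Rintegral => w _.
  rewrite patchE indicE (_ : (w \in Z @^-1` B) = (Z w \in B)) //.
  by case: (Z w \in B); rewrite ?mulr1 ?mulr0.
have iDB := bounded_measurable_integrable P mA (bounded_measurableM bD bindB).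
rewrite -[RHS]addr0 -(mulr0 (c / 2)) -int_indicB -(RintegralZl _ mA iDB).
rewrite -RintegralD //; first by apply: eq_Rintegral => w _; rewrite /psi'; lra.
  exact/bounded_measurable_integrable/bounded_measurableM/(bounded_comp mpsi' psi'_c).
exact/bounded_measurable_integrable/bounded_measurableZ/bounded_measurableM.
Qed.

Lemma normr_Rintegral_mul_comp_le_geometric n c (psi : R -> R) :
  measurable_fun setT psi -> (forall w, 0 <= psi (Z w) <= c) ->
  `|\int[P]_(w in A) (D w * psi (Z w))| <= geometric (M * c) 2^-1 n.
Proof.
elim: n c psi => [|n IHn] c psi mpsi psi_c /=.
  by rewrite expr0 mulr1; exact: normr_Rintegral_mul_comp_le.
have [psi' [mpsi' psi'_c] ->] := Rintegral_mul_comp_halve _ _ mpsi psi_c.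
by apply: le_trans (IHn _ _ mpsi' psi'_c) _; rewrite /= exprS; lra.
Qed.

Lemma Rintegral_mul_comp_eq0 {c} {psi : R -> R} : measurable_fun setT psi ->
  (forall w, 0 <= psi (Z w) <= c) -> \int[P]_(w in A) (D w * psi (Z w)) = 0.
Proof.
move=> mpsi psi_c; apply/eqP; rewrite -normr_le0.
apply: cvgr_to_ge (@cvg_geometric _ (M * c) 2^-1 _) _.
  by rewrite ger0_norm ?invr_ge0 // invf_lt1 ?ltr1n.
by apply: nearW => n; exact: normr_Rintegral_mul_comp_le_geometric mpsi psi_c.
Qed.

End orthogonality.

Section condexp.
Context {d} {T : measurableType d} {R : realType} (P : probability T R).
Context {A : set T} (mA : measurable A) {Y Yh : T -> R} {h : R -> R}.
Hypotheses (mY : measurable_fun setT Y) (mYh : measurable_fun setT Yh).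
Hypotheses (Y01 : forall w, 0 <= Y w <= 1) (hY : is_condexp P A Y Yh h).

Let bY : bounded_measurable Y. Proof. exact: bounded_measurable01. Qed.

Let mYh_pre {B} : measurable B -> measurable (A `&` Yh @^-1` B).
Proof.
by move=> mB; apply: measurableI => //; rewrite -[_ @^-1` _]setTI; exact: mYh.
Qed.

Lemma is_condexp_ae01 : {ae P, forall w, A w -> 0 <= h (Yh w) <= 1}.
Proof.
have [mh [ih hB]] := hY.
have null s B : measurable B ->
    (forall w, B (h (Yh w)) -> 0 < s * (h (Yh w) - Y w)) ->
    P.-negligible (A `&` Yh @^-1` (h @^-1` B)).
  move=> mB pos; have mhB : measurable (h @^-1` B).
    by rewrite -[_ @^-1` _]setTI; exact: mh.
  have mE := mYh_pre mhB; apply/negligibleP => //.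
  have mu : measurable_fun setT (fun w => s * (h (Yh w) - Y w)).
    by apply/measurable_funM/measurable_funB => //; exact: measurableT_comp.
  apply: (gt0_integral_eq0_null P mE (measurable_funS measurableT _ mu)) => //.
    by move=> w [_]; exact: pos.
  have ihE : P.-integrable (A `&` Yh @^-1` (h @^-1` B)) (EFin \o (h \o Yh)).
    exact: integrableS mA mE (@subIsetl _ _ _) ih.
  have iYE := bounded_measurable_integrable P mE bY.
  under eq_integral do rewrite EFinM EFinB.
  rewrite integralZl ?integralB_EFin // -?hB // ?subee ?mule0 //.
    exact: integrable_fin_num iYE.
  exact: integrableB.
have null1 := null 1 `]1, +oo[%classic (measurable_itv _).
have null0 := null (-1) `]-oo, 0[%classic (measurable_itv _).
apply: (negligibleS _ (negligibleU (null1 _) (null0 _))).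
- move=> w /not_implyP[Aw /negP]; rewrite negb_and -!ltNge => /orP[h0|h1].
    by right; split; rewrite //= in_itv.
  by left; split; rewrite //= in_itv /= andbT.
all: by move=> w; rewrite set_itvE /= => ?; have := Y01 w; lra.
Qed.

Let clip01_ae : {ae P, forall w, A w -> clip01 (h (Yh w)) = h (Yh w)}.
Proof. by apply: filterS is_condexp_ae01 => w h01 /h01 /clip01_id. Qed.

Lemma is_condexp_clip01 : is_condexp P A Y Yh (clip01 \o h).
Proof.
have [mh [ih hB]] := hY; have mch := measurableT_comp measurable_clip01 mh.
split => //; split => [|B mB].
  apply: bounded_measurable_integrable (bounded_measurable01 _ _) => //.
    exact: measurableT_comp.
  by move=> w; exact: clip01_ge0_le1.
rewrite hB //; apply: ae_eq_integral => //.
- exact: mYh_pre.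
- by apply/measurable_EFinP; apply: measurable_funS (measurableT_comp mh mYh).
- by apply/measurable_EFinP; apply: measurable_funS (measurableT_comp mch mYh).
by apply: filterS clip01_ae => w hw [/hw /= ->].
Qed.

Lemma condE_clip01 : condE P A (fun w => (Y w - h (Yh w)) ^+ 2) =
  condE P A (fun w => (Y w - clip01 (h (Yh w))) ^+ 2).
Proof.
have [mh _] := hY; apply: condE_ae_eq => //.
- by apply: measurable_funX; apply: measurable_funB => //; exact: measurableT_comp.
- apply: measurable_funX; apply: measurable_funB => //.
  exact: measurableT_comp (measurableT_comp measurable_clip01 mh) mYh.
by apply: filterS clip01_ae => w hw /hw ->.
Qed.

End condexp.

Section condexp_residual.
Context {d} {T : measurableType d} {R : realType} (P : probability T R).
Context {A : set T} (mA : measurable A) {Y Yh : T -> R} {h : R -> R}.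
Hypotheses (mY : measurable_fun setT Y) (mYh : measurable_fun setT Yh).
Hypotheses (Y01 : forall w, 0 <= Y w <= 1) (h01 : forall t, 0 <= h t <= 1).
Hypotheses (hY : is_condexp P A Y Yh h) (PA : (0 < P A)%E).

Lemma condE_condexp_residual_mul (psi : R -> R) : measurable_fun setT psi ->
  (forall w, 0 <= psi (Yh w) <= 1) ->
  condE P A (fun w => (Y w - h (Yh w)) * psi (Yh w)) = 0.
Proof.
move=> mpsi psi01; have [mh [_ hB]] := hY.
have mhYh := measurableT_comp mh mYh.
have res1 w : `|Y w - h (Yh w)| <= 1.
  by rewrite ler_norml; have := Y01 w; have := h01 (Yh w); lra.
suff E0 : \int[P]_(w in A) ((Y w - h (Yh w)) * psi (Yh w)) = 0.
  by rewrite condEE E0 mul0r.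
apply: (Rintegral_mul_comp_eq0 P mA (measurable_funB mY mhYh) res1 mYh _ mpsi psi01).
move=> B mB; have mAB : measurable (A `&` Yh @^-1` B).
  by apply: measurableI => //; rewrite -[_ @^-1` _]setTI; exact: mYh.
rewrite RintegralB // ?bounded_measurable_integrable //.
- by rewrite /Rintegral hB // subrr.
- exact: bounded_measurable01.
- by apply: bounded_measurable01 mhYh _ => w; exact: h01.
Qed.

Lemma condE_condexp_residual : condE P A (fun w => Y w - h (Yh w)) = 0.
Proof.
rewrite -(@condE_condexp_residual_mul (fun=> 1)) => [||w]; last by rewrite lexx ler01.
- by congr condE; apply/funext => w; rewrite mulr1.
- exact: measurable_cst.
Qed.

Lemma condCov_condexp_residual (psi : R -> R) : measurable_fun setT psi ->
  (forall w, 0 <= psi (Yh w) <= 1) ->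
  condCov P A (fun w => Y w - h (Yh w)) (fun w => psi (Yh w)) = 0.
Proof.
move=> mpsi psi01.
by rewrite /condCov condE_condexp_residual_mul // condE_condexp_residual mul0r subrr.
Qed.

Lemma condE_condexp_sqrB_le : (forall w, 0 <= Yh w <= 1) ->
  condE P A (fun w => (Y w - h (Yh w)) ^+ 2) + 4 * condCov P A Y Yh ^+ 2 <=
  condCov P A Y Y.
Proof.
move=> Yh01; have [mh _] := hY.
have bY := bounded_measurable01 mY Y01.
have bh := bounded_measurable01 (measurableT_comp mh mYh) (fun w => h01 (Yh w)).
have cov_hYh : condCov P A (fun w => h (Yh w)) Yh = condCov P A Y Yh.
  have := condCov_condexp_residual id (@measurable_id _ _ setT) Yh01.
  by rewrite condCovBl //; [lra | exact: bounded_measurable01].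
have var_h : 4 * condCov P A Y Yh ^+ 2 <=
    condCov P A (fun w => h (Yh w)) (fun w => h (Yh w)).
  by rewrite -cov_hYh; exact: condCov_sqr_le.
rewrite condE_sqrB_orth //; first lra.
  exact: condE_condexp_residual.
exact: condCov_condexp_residual (fun w => h01 (Yh w)).
Qed.

End condexp_residual.

Theorem corollary2 (d d' : measure_display) (T : measurableType d)
  (Xs : measurableType d') (R : realType) (P : probability T R)
  (X : T -> Xs) (Y Yh : T -> R)
  (F : set (Xs -> R)) (alpha eta : R) (S : set Xs) (g : R -> R) :
  measurable_fun setT X ->
  measurable_fun setT Y ->
  measurable_fun setT Yh ->
  (forall w, 0 <= Y w <= 1) ->
  (forall w, 0 <= Yh w <= 1) ->
  (forall f, F f -> measurable_fun setT f /\ forall x, 0 <= f x <= 1) ->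
  0 <= alpha ->
  measurable S ->
  (0 < P (X @^-1` S))%E ->
  indistinguishable P X Y F alpha S ->
  measurable_fun setT g ->
  (forall t, 0 <= t <= 1 -> 0 <= g t <= 1) ->
  0 <= eta ->
  (exists h, is_condexp P (X @^-1` S) Y Yh h /\
     condE P (X @^-1` S) (fun w => (Y w - g (Yh w)) ^+ 2)
       <= condE P (X @^-1` S) (fun w => (Y w - h (Yh w)) ^+ 2) + eta) ->
  forall f, F f ->
    condE P (X @^-1` S) (fun w => (Y w - g (Yh w)) ^+ 2)
      + 4 * (condCov P (X @^-1` S) Y Yh) ^+ 2
    <= condE P (X @^-1` S) (fun w => (Y w - f (X w)) ^+ 2) + 2 * alpha + eta.
Proof.
move=> mX mY mYh Y01 Yh01 F01 _ mS PA indist _ _ _ [h [hY g_fit]] f Ff.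
move: PA indist g_fit; rewrite /indistinguishable; set A := X @^-1` S.
move=> PA indist g_fit; have mA : measurable A by rewrite -[A]setTI; exact: mX.
have [mf f01] := F01 f Ff.
have h_fit : condE P A (fun w => (Y w - h (Yh w)) ^+ 2) +
    4 * condCov P A Y Yh ^+ 2 <= condCov P A Y Y.
  have h'01 t : 0 <= (clip01 \o h) t <= 1 by exact: clip01_ge0_le1.
  have h'Y := is_condexp_clip01 P mA mY mYh Y01 hY.
  rewrite (condE_clip01 P mA mY mYh Y01 hY).
  by have := condE_condexp_sqrB_le P mA mY mYh Y01 h'01 h'Y PA Yh01.
have f_fit : condCov P A Y Y - 2 * condCov P A (fun w => f (X w)) Y <=
    condE P A (fun w => (Y w - f (X w)) ^+ 2).
  have bY := bounded_measurable01 mY Y01.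
  have bfX := bounded_measurable01 (measurableT_comp mf mX) (fun w => f01 (X w)).
  exact: condE_sqrB_ge.
have := indist f Ff; rewrite ler_norml => /andP[_ cov_f].
lra.
Qed.
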